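(* Let $g$ be a non-trivial non-negative real-valued multiplicative function, uniformly bounded on the primes, for which the series $\sum q^{-1}g(q)$, taken over prime-powers $q=p^k$ with $k\ge2$, converges, and for which the sums $y^{-1}\sum_{q\le y}g(q)\log q$ (over all prime-powers $q\le y$) are uniformly bounded for $y\ge2$. Then \[ \sum_{u<n\le v}\frac{g(n)}{n} \ll \left(\log\Big(\frac{\log v}{\log u}\Big)+\frac{1}{\log x}\right)\sum_{n\le x}\frac{g(n)}{n} \] uniformly for $x^{1/2}\le u\le v\le x^{3/2}$, $x\ge2$.
   Context: Multiplicative means $f(mn)=f(m)f(n)$ whenever $\gcd(m,n)=1$, with $f(1)=1$. $A\ll B$ means $|A|\le KB$ for a constant $K$ (here depending on $g$ but not on $u,v,x$). *)

From HB Require Import structures.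
From mathcomp Require Import all_boot all_order all_algebra.
From mathcomp Require Import all_classical all_reals all_analysis.
Set Implicit Arguments. Unset Strict Implicit. Unset Printing Implicit Defensive.
Import Order.TTheory GRing.Theory Num.Theory numFieldNormedType.Exports.
Local Open Scope ring_scope.

Definition multiplicative_fn (R : realType) (g : nat -> R) : Prop :=
  g 1%N = 1 /\
  forall m n : nat, (0 < m)%N -> (0 < n)%N -> coprime m n -> g (m * n)%N = g m * g n.

(* non-trivial: not the identity of Dirichlet convolution (g(n)=0 for all n>1) *)
Definition nontrivial (R : realType) (g : nat -> R) : Prop :=
  exists n : nat, (1 < n)%N /\ g n != 0.

Definition is_pp (k0 : nat) (q : nat) : bool :=
  `[< exists p k : nat, prime p /\ (k0 <= k)%N /\ q = (p ^ k)%N >].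

Definition sum_gn (R : realType) (g : nat -> R) (a b : R) : R :=
  \sum_(0 <= n < (Num.truncn b).+1 | (0 < n)%N && (a < n%:R)) g n / n%:R.

Definition cheb_g (R : realType) (g : nat -> R) (y : R) : R :=
  \sum_(0 <= q < (Num.truncn y).+1 | is_pp 1 q) g q * ln q%:R.

Definition pp2_terms (R : realType) (g : nat -> R) : R^nat :=
  fun q => if is_pp 2 q then g q / q%:R else 0.

From HB Require Import structures.
From mathcomp Require Import all_boot all_order all_algebra.
From mathcomp Require Import all_classical all_reals all_analysis.
From mathcomp Require Import ring lra.
Import Order.TTheory GRing.Theory Num.Theory numFieldNormedType.Exports.
Local Open Scope ring_scope.

(* Write G = sum_gdiv g and S = sum_g g for the partial sums of g(n)/n and of
   g(n).  Expanding log n over the prime-power parts n_p of n and using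
   multiplicativity, g(n) log n = sum_(p | n) g(n_p) log(n_p) g(n/n_p); as
   (n, p) |-> (n/n_p, n_p) is injective, sum_(n <= N) g(n) log n is at most
   sum_(m <= N) g(m) sum_(q <= N/m) g(q) log q <= C N G(N), whence
   S(N) log N <= (C+1) N G(N).  Partial summation then gives
   G(N) - G(M) <= (C+1) G(N) (2/log M + log log N - log log M).  When the
   bracket is at most 1/(2(C+1)) this says G(N) <= 2 G(M); a bounded number of
   such doublings gives G(x^(3/2)) << G(x) once log x is large, while for
   small x everything is bounded by a constant, since G(x) >= 1. *)

Lemma ler_sum_subset (R : numDomainType) (T : finType) (A B : {pred T}) (F : T -> R) :
  {subset A <= B} -> (forall x, x \in B -> 0 <= F x) ->
  \sum_(x in A) F x <= \sum_(x in B) F x.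
Proof.
move=> AB F0; rewrite [X in _ <= X](bigID (mem A)) /=.
have -> : \sum_(x in B | x \in A) F x = \sum_(x in A) F x.
  by apply: eq_bigl => x; case xA: (x \in A); rewrite ?andbT ?andbF ?AB.
by rewrite lerDl; apply: sumr_ge0 => x /andP[xB _]; apply: F0.
Qed.

Section LogBounds.
Context {R : realType}.
Implicit Types (t u v x y : R) (n : nat).

Lemma ln_le_subr1 {t} : 0 < t -> ln t <= t - 1.
Proof.
move=> t0; have := @le_ln1Dx R (t - 1); rewrite addrCA subrr addr0; apply; lra.
Qed.

Lemma ln_sub_ge {x y} : 0 < x -> 0 < y -> 1 - y / x <= ln x - ln y.
Proof.
move=> x0 y0; have := ln_le_subr1 (divr_gt0 y0 x0).
rewrite ln_div ?posrE //; lra.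
Qed.

Lemma ln_prod (I : Type) (r : seq I) (P : pred I) (F : I -> R) :
  (forall i, P i -> 0 < F i) -> ln (\prod_(i <- r | P i) F i) = \sum_(i <- r | P i) ln (F i).
Proof.
move=> F0; elim: r => [|i r IH]; first by rewrite !big_nil ln1.
rewrite !big_cons; case: ifP => Pi //.
by rewrite lnM ?IH ?posrE ?F0 //; apply: prodr_gt0.
Qed.

Lemma ln_nat_ge0 n : 0 <= ln (n%:R : R).
Proof. by case: n => [|n]; [rewrite ln0 | apply: ln_ge0; rewrite ler1n]. Qed.

Lemma ge2_of_ln_gt1 {y} : 1 < ln y -> 2 <= y.
Proof.
move=> ly; have y0 : 0 < y by rewrite ltNge; apply/negP => y0; move: ly; rewrite ln0 //; lra.
rewrite -[y]lnK ?posrE //; apply: le_trans (expR_ge1Dx _); lra.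
Qed.

Lemma ln_div_ge0 x y : 0 < x -> x <= y -> 0 <= ln (y / x).
Proof. by move=> x0 xy; rewrite ln_ge0 // ler_pdivlMr // mul1r. Qed.

Lemma lnln_le {x y} : 1 < x -> x <= y -> ln (ln x) <= ln (ln y).
Proof.
move=> x1 xy; have y1 := lt_le_trans x1 xy.
by rewrite ler_ln ?posrE ?ln_gt0 // ler_ln ?posrE //; lra.
Qed.

Lemma inv_nlnn_le n : (3 <= n)%N ->
  (n%:R * ln n%:R)^-1 <= ln (ln (n%:R : R)) - ln (ln n.-1%:R).
Proof.
move=> n3; have n1 : (1 < n.-1)%N by case: n n3 => [|[|[|n]]].
have m0 : (0 : R) < n.-1%:R by rewrite ltr0n ltnW.
have n0 : (0 : R) < n%:R by rewrite ltr0n (leq_trans _ n3).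
have l1 : (0 : R) < ln n.-1%:R by rewrite ln_gt0 // ltr1n.
have l0 : (0 : R) < ln n%:R by rewrite ln_gt0 // ltr1n (leq_trans _ n3).
have h1 : (n%:R : R)^-1 <= ln n%:R - ln n.-1%:R.
  apply: le_trans _ (ln_sub_ge n0 m0).
  have -> : (n.-1%:R : R) = n%:R - 1.
    by rewrite -[in RHS](prednK (leq_trans _ n3)) // -natr1 addrK.
  suff -> : 1 - (n%:R - 1) / n%:R = (n%:R : R)^-1 by [].
  by field; rewrite gt_eqF.
apply: le_trans _ (ln_sub_ge l0 l1).
have -> : 1 - ln n.-1%:R / ln n%:R = (ln n%:R - ln (n.-1%:R : R)) / ln n%:R.
  by field; rewrite gt_eqF.
by rewrite invfM ler_pM2r ?invr_gt0.
Qed.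

Lemma sum_inv_nlnn_le a b : (2 <= a)%N -> (a <= b)%N ->
  \sum_(a.+1 <= n < b.+1) (n%:R * ln (n%:R : R))^-1 <= ln (ln (b%:R : R)) - ln (ln a%:R).
Proof.
move=> a2 /subnKC <-; elim: (b - a)%N => [|k IH]; first by rewrite addn0 big_geq // subrr.
rewrite addnS big_nat_recr /= ?ltnS ?leq_addr //.
have := @inv_nlnn_le (a + k).+1; rewrite ltnS (leq_trans a2) ?leq_addr // => /(_ isT).
move: IH; set s := \sum_(_ <= _ < _) _; set t := _^-1; rewrite /=; lra.
Qed.

Lemma inv_ln_add_sum_inv_nlnn_le u v :
  2 <= u -> u <= v -> (Num.truncn u < Num.truncn v)%N ->
  (ln (Num.truncn v)%:R)^-1 + \sum_((Num.truncn u).+1 <= n < Num.truncn v) (n%:R * ln n%:R)^-1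
  <= 2 * (ln u)^-1 + ln (ln v / ln u).
Proof.
set M := Num.truncn u; set N := Num.truncn v => u2 uv MN.
have u1 : 1 < u by lra.
have lu : 0 < ln u by rewrite ln_gt0.
have uN : u < N%:R by rewrite -truncn_lt_nat //; lra.
have uM1 : u < M.+1%:R by rewrite -truncn_lt_nat //; lra.
have Nv : N%:R <= v by rewrite /N truncn_le; lra.
have inv_ln_le x : u <= x -> (ln x)^-1 <= (ln u)^-1.
  by move=> ux; rewrite lef_pV2 ?posrE ?ln_gt0 ?ler_ln ?posrE //; lra.
have lnln_uv := lnln_le u1 uv.
have := inv_ln_le _ (ltW uN).
rewrite ln_div ?posrE ?ln_gt0; try lra.
suff : \sum_(M.+1 <= n < N) (n%:R * ln (n%:R : R))^-1 <= (ln u)^-1 + (ln (ln v) - ln (ln u)).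
  set s := \sum_(_ <= _ < _) _; set a := (ln u)^-1; lra.
have [M1N|M1N] := leqP N M.+1.
  rewrite big_geq //; have : 0 <= (ln u)^-1 by rewrite invr_ge0 ltW.
  lra.
rewrite big_ltn //; apply: lerD.
  rewrite invfM; apply: le_trans (inv_ln_le _ (ltW uM1)).
  rewrite ler_piMl ?invr_ge0 ?ln_nat_ge0 // invf_le1 ?ltr0n ?ler1n //.
have M1N1 : (M.+1 <= N.-1)%N by rewrite -ltnS prednK // (leq_trans _ M1N).
apply: le_trans (_ : _ <= ln (ln N.-1%:R) - ln (ln M.+1%:R)) _.
  by rewrite -[in leLHS](prednK (leq_trans _ M1N)) // sum_inv_nlnn_le // leqW // truncn_ge_nat; lra.
have : (M.+1%:R : R) <= N.-1%:R by rewrite ler_nat.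
have : (N.-1%:R : R) <= N%:R by rewrite ler_nat leq_pred.
by move=> *; apply: lerB; apply: lnln_le; lra.
Qed.

Lemma ln_powR_range [x u v] : 2 <= x -> x `^ 2^-1 <= u -> u <= v -> v <= x `^ (3 / 2) ->
  [/\ 0 < u, ln x <= 2 * ln u, ln u <= ln v & ln v <= 3 / 2 * ln x].
Proof.
move=> x2 xu uv vx; have x0 : 0 < x by lra.
have u0 : 0 < u := lt_le_trans (powR_gt0 _ x0) xu.
have v0 : 0 < v by lra.
split=> //.
- have : ln (x `^ 2^-1) <= ln u by rewrite ler_ln ?posrE ?powR_gt0.
  by rewrite ln_powR; lra.
- by rewrite ler_ln ?posrE.
- by rewrite -ln_powR ler_ln ?posrE ?powR_gt0.
Qed.

End LogBounds.

Lemma is_pp_ge2 k q : (0 < k)%N -> is_pp k q -> (2 <= q)%N.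
Proof.
move=> k0 /asboolP[p [l [p_pr [kl ->]]]].
apply: leq_trans (prime_gt1 p_pr) _; rewrite -[X in (X <= _)%N]expn1.
exact: leq_pexp2l (prime_gt0 p_pr) (leq_trans k0 kl).
Qed.

Lemma is_pp_partn n p : p \in primes n -> is_pp 1 n`_p.
Proof.
rewrite mem_primes => /and3P[p_pr n0 pn]; apply/asboolP.
by exists p, (logn p n); rewrite p_part logn_gt0 mem_primes p_pr n0 pn.
Qed.

Lemma pdiv_partn n p : p \in primes n -> pdiv n`_p = p.
Proof.
move=> pn; have p_pr : prime p by move: pn; rewrite mem_primes => /andP[].
by rewrite p_part -(prednK (_ : 0 < logn p n)%N) ?logn_gt0 // pdiv_pfactor.
Qed.

Definition sum_g {R : realType} (g : nat -> R) N :=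
  \sum_(0 <= n < N.+1 | (0 < n)%N) g n.
Definition sum_gdiv {R : realType} (g : nat -> R) N :=
  \sum_(0 <= n < N.+1 | (0 < n)%N) g n / n%:R.

Section Summatory.
Context {R : realType} {g : nat -> R}.
Hypothesis g1 : g 1%N = 1.
Hypothesis g_ge0 : forall n, 0 <= g n.
Hypothesis gM : forall m n : nat, (0 < m)%N -> (0 < n)%N -> coprime m n ->
  g (m * n)%N = g m * g n.

Lemma cheb_g_ge0 y : 0 <= cheb_g g y.
Proof.
apply: sumr_ge0 => q _; exact: mulr_ge0 (g_ge0 q) (ln_nat_ge0 q).
Qed.

Lemma cheb_g_lt2 y : y < 2 -> cheb_g g y = 0.
Proof.
move=> y2; rewrite /cheb_g big_nat_cond big1 // => q /andP[/andP[_ qy] /is_pp_ge2 q2].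
have : (Num.truncn y <= 1)%N by rewrite truncn_le_nat.
by rewrite ltnS in qy; move/(leq_trans qy)/(leq_trans (q2 isT)).
Qed.

Lemma cheb_g_div N m : (0 < m)%N ->
  cheb_g g (N%:R / m%:R) = \sum_(q < N.+1 | is_pp 1 q && (q * m <= N)%N) g q * ln q%:R.
Proof.
move=> m0; have m0' : (0 : R) < m%:R by rewrite ltr0n.
have tN : (Num.truncn (N%:R / m%:R : R) < N.+1)%N.
  rewrite ltnS truncn_le_nat ltr_pdivrMr // -natrM ltr_nat.
  by rewrite (leq_trans (ltnSn N)) // leq_pmulr.
rewrite /cheb_g (big_nat_widen _ _ _ _ _ tN) big_mkord; apply: eq_bigl => q /=.
by rewrite ltnS truncn_ge_nat ?divr_ge0 // ler_pdivlMr // -natrM ler_nat.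
Qed.

Lemma g_mul_ln_partn [n N] : (0 < n)%N -> (n <= N)%N ->
  g n * ln n%:R =
  \sum_(p < N.+1 | (p : nat) \in primes n) g (n`_p)%N * ln (n`_p)%N%:R * g (n`_p^')%N.
Proof.
move=> n0 nN.
have nE : (n%:R : R) = \prod_(0 <= p < N.+1) (n`_p)%N%:R.
  rewrite -natr_prod -[in LHS](partnT n0) (widen_partn _ nN).
  by congr _%:R; apply: eq_bigr => p _; rewrite p_part.
rewrite nE ln_prod => [|p _]; last by rewrite ltr0n part_gt0.
rewrite mulr_sumr big_mkord [RHS]big_mkcond /=; apply: eq_bigr => p _.
case: ifP => pn; first by rewrite mulrAC -gM ?part_gt0 ?coprime_partC // partnC.
by rewrite (eqP (_ : n`_p == 1)%N) ?ln1 ?mulr0 // p_part_eq1 pn.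
Qed.

Lemma sum_g_ln_le_cheb N :
  \sum_(0 <= n < N.+1 | (0 < n)%N) g n * ln n%:R <=
  \sum_(0 <= m < N.+1 | (0 < m)%N) g m * cheb_g g (N%:R / m%:R).
Proof.
pose T := ('I_N.+1 * 'I_N.+1)%type.
pose F (mq : T) := g mq.2 * ln (mq.2 : nat)%:R * g mq.1.
pose A := [pred np : T | (0 < np.1)%N && ((np.2 : nat) \in primes np.1)].
pose B := [pred mq : T | (0 < mq.1)%N && (is_pp 1 mq.2 && (mq.2 * mq.1 <= N)%N)].
pose split (np : T) : T := (inord (np.1`_np.2^')%N, inord (np.1`_np.2)%N).
pose join (mq : T) : T := (inord (mq.2 * mq.1), inord (pdiv mq.2)).
have splitE np : np \in A ->
    (split np).1 = (np.1`_np.2^')%N :> nat /\ (split np).2 = (np.1`_np.2)%N :> nat.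
  case: np => n p /andP[/= n0 _]; rewrite /= !inordK // ltnS;
  by apply: leq_trans (dvdn_leq n0 (dvdn_part _ _)) _; rewrite -ltnS.
have splitK : {in A, cancel split join}.
  move=> [n p] npA; have [e1 e2] := splitE _ npA; case/andP: npA => /= n0 pn.
  by rewrite /join e1 e2 /= partnC // pdiv_partn // !inord_val.
have split_sub : {subset split @: A <= B}.
  move=> _ /imsetP[[n p] npA ->]; have [e1 e2] := splitE _ npA.
  case/andP: npA => /= n0 pn.
  by rewrite inE /= e1 e2 part_gt0 partnC // is_pp_partn // -ltnS ltn_ord.
have lhsE : \sum_(0 <= n < N.+1 | (0 < n)%N) g n * ln n%:R = \sum_(np in A) F (split np).
  rewrite big_mkord; under eq_bigr => n n0 do rewrite (g_mul_ln_partn n0 (ltn_ord n)).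
  rewrite pair_big_dep; apply: eq_big => // np npA.
  by have [e1 e2] := splitE _ npA; rewrite /F e1 e2.
have rhsE : \sum_(0 <= m < N.+1 | (0 < m)%N) g m * cheb_g g (N%:R / m%:R) =
    \sum_(mq in B) F mq.
  have -> : \sum_(mq in B) F mq = \sum_(m : 'I_N.+1 | (0 < m)%N)
      \sum_(q : 'I_N.+1 | is_pp 1 q && (q * m <= N)%N) F (m, q) by rewrite pair_big_dep.
  rewrite big_mkord; apply: eq_bigr => m m0.
  by rewrite cheb_g_div // mulr_sumr; apply: eq_bigr => q _; rewrite mulrC.
rewrite lhsE rhsE -big_imset; last exact: can_in_inj splitK.
apply: ler_sum_subset split_sub _ => mq _.
by rewrite /F mulr_ge0 ?mulr_ge0 ?ln_nat_ge0.
Qed.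

Lemma sum_g_ge0 N : 0 <= sum_g g N.
Proof. exact: sumr_ge0. Qed.

Lemma sum_gdiv_ge0 N : 0 <= sum_gdiv g N.
Proof. by apply: sumr_ge0 => n _; rewrite divr_ge0. Qed.

Lemma sum_gS N : sum_g g N.+1 = sum_g g N + g N.+1.
Proof. by rewrite /sum_g big_mkcond big_nat_recr //= -big_mkcond. Qed.

Lemma sum_gdivS N : sum_gdiv g N.+1 = sum_gdiv g N + g N.+1 / N.+1%:R.
Proof. by rewrite /sum_gdiv big_mkcond big_nat_recr //= -big_mkcond. Qed.

Lemma sum_gdiv_split [M N] : (M <= N)%N ->
  sum_gdiv g N = sum_gdiv g M + \sum_(0 <= n < N.+1 | (0 < n)%N && (M < n)%N) g n / n%:R.
Proof.
move=> MN; rewrite /sum_gdiv (bigID (fun n => n <= M)%N) /=; congr (_ + _).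
  by rewrite [in RHS](big_nat_widen 0 M.+1 N.+1).
by apply: eq_bigl => n; rewrite -ltnNge.
Qed.

Lemma le_sum_gdiv [M N] : (M <= N)%N -> sum_gdiv g M <= sum_gdiv g N.
Proof.
by move=> MN; rewrite (sum_gdiv_split MN) lerDl; apply: sumr_ge0 => n _; rewrite divr_ge0.
Qed.

Lemma sum_gnE u v : 0 <= u -> u <= v ->
  sum_gn g u v = sum_gdiv g (Num.truncn v) - sum_gdiv g (Num.truncn u).
Proof.
move=> u0 uv; rewrite (sum_gdiv_split (le_truncn uv)) addrAC subrr add0r.
by apply: eq_bigl => n; rewrite truncn_lt_nat.
Qed.

Lemma sum_gn0E x : sum_gn g 0 x = sum_gdiv g (Num.truncn x).
Proof. by apply: eq_bigl => n; rewrite ltr0n andbb. Qed.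

Lemma sum_gdiv_abel M k : (0 < M)%N ->
  sum_gdiv g (M + k) - sum_gdiv g M = sum_g g (M + k) / (M + k)%:R - sum_g g M / M%:R +
    \sum_(M <= n < M + k) sum_g g n / (n%:R * n.+1%:R).
Proof.
move=> M0; elim: k => [|k IH]; first by rewrite addn0 big_geq // !subrr addr0.
rewrite addnS sum_gdivS sum_gS big_nat_recr /= ?leq_addr //.
have M0' : (0 : R) < M%:R by rewrite ltr0n.
have k0 : (0 : R) <= k%:R by [].
rewrite -[sum_gdiv g (M + k)](subrK (sum_gdiv g M)) IH.
by rewrite natrD -!natr1; field; rewrite !gt_eqF //; lra.
Qed.

Lemma sum_gn_le_sum_gdiv [u v] : 0 <= u -> u <= v -> sum_gn g u v <= sum_gdiv g (Num.truncn v).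
Proof. by move=> u0 uv; rewrite sum_gnE // gerBl sum_gdiv_ge0. Qed.

Lemma sum_gdiv_ge1 N : (0 < N)%N -> 1 <= sum_gdiv g N.
Proof.
move=> N0; apply: le_trans (le_sum_gdiv N0).
by rewrite sum_gdivS /sum_gdiv big_mkcond big_nat1 /= add0r g1 divr1.
Qed.

Context {C : R}.
Hypothesis cheb_g_le : forall y, 2 <= y -> cheb_g g y <= C * y.

Lemma C_ge0 : 0 <= C.
Proof.
have : cheb_g g 2 <= C * 2 := cheb_g_le _ (lexx _).
have := cheb_g_ge0 2; lra.
Qed.

Lemma cheb_g_le_ge0 y : 0 <= y -> cheb_g g y <= C * y.
Proof.
move=> y0; have [y2|/cheb_g_le//] := ltP y 2.
by rewrite cheb_g_lt2 // mulr_ge0 ?C_ge0.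
Qed.

Lemma sum_g_ln_le N :
  \sum_(0 <= n < N.+1 | (0 < n)%N) g n * ln n%:R <= C * N%:R * sum_gdiv g N.
Proof.
apply: le_trans (sum_g_ln_le_cheb N) _.
rewrite /sum_gdiv mulr_sumr; apply: ler_sum => m m0.
have y0 : (0 : R) <= N%:R / m%:R by rewrite divr_ge0.
have -> : C * N%:R * (g m / m%:R) = g m * (C * (N%:R / m%:R)) by ring.
by apply: ler_wpM2l; [apply: g_ge0 | apply: cheb_g_le_ge0].
Qed.

Lemma sum_g_mul_ln_le N : sum_g g N * ln N%:R <= (C + 1) * N%:R * sum_gdiv g N.
Proof.
have -> : sum_g g N * ln N%:R =
    \sum_(0 <= n < N.+1 | (0 < n)%N) g n * (ln N%:R - ln n%:R) +
    \sum_(0 <= n < N.+1 | (0 < n)%N) g n * ln n%:R.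
  by rewrite /sum_g mulr_suml -big_split; apply: eq_bigr => n _ /=; ring.
rewrite mulrDl mulrDl mul1r addrC; apply: lerD; first exact: (sum_g_ln_le N).
rewrite /sum_gdiv mulr_sumr big_nat_cond [leRHS]big_nat_cond.
apply: ler_sum => n /andP[/andP[_ nN] n0].
have n0' : (0 : R) < n%:R by rewrite ltr0n.
have N0' : (0 : R) < N%:R by rewrite ltr0n (leq_trans n0).
have -> : N%:R * (g n / n%:R) = g n * (N%:R / n%:R) by ring.
rewrite -ln_div ?posrE //; apply: ler_wpM2l => //.
by apply: le_trans (ln_le_subr1 (divr_gt0 N0' n0')) _; rewrite gerBl.
Qed.

Lemma sum_g_div_le [n N] : (2 <= n)%N -> (n <= N)%N ->
  sum_g g n / n%:R <= (C + 1) * sum_gdiv g N / ln n%:R.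
Proof.
move=> n2 nN; have n0 : (0 : R) < n%:R by rewrite ltr0n (leq_trans _ n2).
have l0 : (0 : R) < ln n%:R by rewrite ln_gt0 // ltr1n.
rewrite ler_pdivlMr // mulrAC ler_pdivrMr //; apply: le_trans (sum_g_mul_ln_le n) _.
rewrite mulrAC ler_wpM2r ?ler0n // ler_wpM2l ?addr_ge0 ?C_ge0 //.
exact: le_sum_gdiv.
Qed.

Lemma sum_gdiv_sub_le [M N] : (0 < M)%N -> (M <= N)%N ->
  sum_gdiv g N - sum_gdiv g M <=
  sum_g g N / N%:R + \sum_(M.+1 <= n < N) sum_g g n / (n%:R * n.+1%:R).
Proof.
move=> M0 /subnKC <-; rewrite sum_gdiv_abel //; case: (N - M)%N => [|k].
  by rewrite addn0 !big_geq // subrr !addr0 divr_ge0 ?sum_g_ge0.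
rewrite addnS big_ltn ?ltnS ?leq_addr // addrA lerD2r -addrA gerDl addrC subr_le0.
rewrite invfM mulrA ler_piMr ?divr_ge0 ?sum_g_ge0 //.
by rewrite invf_le1 ?ler1n ?ltr0n.
Qed.

Lemma sum_gdiv_sub_le_ln [M N] : (2 <= M)%N -> (M <= N)%N ->
  sum_gdiv g N - sum_gdiv g M <=
  (C + 1) * sum_gdiv g N * ((ln N%:R)^-1 + \sum_(M.+1 <= n < N) (n%:R * ln n%:R)^-1).
Proof.
move=> M2 MN; apply: le_trans (sum_gdiv_sub_le (leq_trans _ M2) MN) _ => //.
rewrite mulrDr; apply: lerD; first exact: sum_g_div_le (leq_trans M2 MN) (leqnn N).
rewrite [_ * \sum_(M.+1 <= n < N) _]mulr_sumr.
rewrite big_nat_cond [leRHS]big_nat_cond; apply: ler_sum => n /andP[/andP[Mn nN] _].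
have n2 : (2 <= n)%N by rewrite (leq_trans M2) // ltnW.
have n0 : (0 : R) < n%:R by rewrite ltr0n (leq_trans _ n2).
apply: le_trans (_ : _ <= (C + 1) * sum_gdiv g N / ln n%:R / n.+1%:R) _.
  by rewrite invfM mulrA ler_wpM2r ?invr_ge0 // sum_g_div_le // ltnW.
rewrite [in X in _ <= X]invfM [in X in _ <= X]mulrA [in X in _ <= X]mulrAC.
rewrite ler_wpM2l ?divr_ge0 ?mulr_ge0 ?sum_gdiv_ge0 ?ln_nat_ge0 //.
  by rewrite addr_ge0 ?C_ge0.
by rewrite lef_pV2 ?posrE ?ltr0Sn ?ler_nat.
Qed.

Lemma sum_gn_le [u v] : 2 <= u -> u <= v ->
  sum_gn g u v <= (C + 1) * sum_gdiv g (Num.truncn v) * (2 * (ln u)^-1 + ln (ln v / ln u)).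
Proof.
move=> u2 uv; have u0 : 0 <= u by lra.
have lu : 0 < ln u by rewrite ln_gt0 //; lra.
have ilu : 0 <= (ln u)^-1 by rewrite invr_ge0 ltW.
have luv : 0 <= ln (ln v / ln u) by rewrite ln_div_ge0 // ler_ln ?posrE //; lra.
rewrite sum_gnE //.
have [|uNv] := leqP (Num.truncn v) (Num.truncn u).
  move/le_sum_gdiv => vu; apply: le_trans (_ : _ <= 0) _; first by rewrite subr_le0.
  by rewrite !mulr_ge0 ?addr_ge0 ?C_ge0 ?sum_gdiv_ge0 ?mulr_ge0.
have u2' : (2 <= Num.truncn u)%N by rewrite truncn_ge_nat.
apply: le_trans (sum_gdiv_sub_le_ln u2' (ltnW uNv)) _.
rewrite ler_wpM2l ?mulr_ge0 ?addr_ge0 ?C_ge0 ?sum_gdiv_ge0 //.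
exact: inv_ln_add_sum_inv_nlnn_le.
Qed.

Lemma sum_gdiv_double [y w] : 8 * (C + 1) <= ln y -> y <= w ->
  ln (ln w / ln y) <= (4 * (C + 1))^-1 ->
  sum_gdiv g (Num.truncn w) <= 2 * sum_gdiv g (Num.truncn y).
Proof.
move=> ly yw lwy; have C0 := C_ge0.
have y2 : 2 <= y by apply: ge2_of_ln_gt1; lra.
have y0 : 0 <= y by lra.
have ly0 : 0 < ln y by lra.
have := sum_gn_le y2 yw; rewrite sum_gnE //.
have bracket : (C + 1) * (2 * (ln y)^-1 + ln (ln w / ln y)) <= 2^-1.
  have : 2 * (ln y)^-1 <= (4 * (C + 1))^-1.
    have -> : (4 * (C + 1))^-1 = 2 * (8 * (C + 1))^-1 by field; lra.
    by rewrite ler_pM2l ?lef_pV2 ?posrE //; lra.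
  move: lwy; set a := (4 * (C + 1))^-1 => lwy ly'.
  have -> : 2^-1 = (C + 1) * (a + a) by rewrite /a; field; lra.
  by rewrite ler_wpM2l //; lra.
have := ler_wpM2l (sum_gdiv_ge0 (Num.truncn w)) bracket.
rewrite mulrAC [_ * (_ * _)]mulrC.
set Gw := sum_gdiv g _; set Gy := sum_gdiv g _; set b := _ * _ * _; lra.
Qed.

Lemma sum_gdiv_chain x j w : 8 * (C + 1) <= ln x -> 0 < w ->
  ln w <= (1 + j%:R / (4 * (C + 1))) * ln x ->
  sum_gdiv g (Num.truncn w) <= 2 ^+ j * sum_gdiv g (Num.truncn x).
Proof.
move=> lx; have C0 := C_ge0; set d := (4 * (C + 1))^-1.
have d0 : 0 < d by rewrite invr_gt0; lra.
have lx0 : 0 < ln x by lra.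
have x0 : 0 < x by rewrite ltNge; apply/negP => /ln0 x0; lra.
elim: j w => [|j IH] w w0 lw.
  rewrite expr0 mul1r le_sum_gdiv //; apply: le_truncn; rewrite -ler_ln ?posrE //.
  by move: lw; rewrite mul0r addr0 mul1r.
have jd : 0 <= j%:R * d by rewrite mulr_ge0 // ltW.
set a := (1 + j%:R * d) * ln x.
have [lwa|alw] := lerP (ln w) a.
  apply: le_trans (IH w w0 lwa) _.
  by rewrite exprS ler_wpM2r ?sum_gdiv_ge0 // ler_peMl ?exprn_ge0 ?ler1n.
have ly : ln (expR a) = a by exact: expRK.
have yw : expR a <= w by rewrite -ler_ln ?posrE ?expR_gt0 // ly ltW.
have xa : ln x <= a by have := mulr_ge0 jd (ltW lx0); rewrite /a; nra.
have lwy : ln (ln w / ln (expR a)) <= d.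
  rewrite ly; apply: le_trans (ln_le_subr1 _) _; first by apply: divr_gt0; lra.
  rewrite lerBlDl ler_pdivrMr; last lra.
  apply: le_trans lw _; rewrite /a -natr1.
  by have := mulr_ge0 (mulr_ge0 jd (ltW d0)) (ltW lx0); nra.
have ly8 : 8 * (C + 1) <= ln (expR a) by rewrite ly; lra.
apply: le_trans (sum_gdiv_double ly8 yw lwy) _.
by rewrite exprS -mulrA ler_wpM2l // IH ?expR_gt0 // ly.
Qed.

Lemma sum_gdiv_ln32_le x w : 8 * (C + 1) <= ln x -> 0 < w -> ln w <= 3 / 2 * ln x ->
  sum_gdiv g (Num.truncn w) <= 2 ^+ (Num.truncn (2 * (C + 1))).+1 * sum_gdiv g (Num.truncn x).
Proof.
move=> lx w0 lw; have C0 := C_ge0; apply: sum_gdiv_chain => //; apply: le_trans lw _.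
rewrite ler_wpM2r //; first lra.
have : 2 * (C + 1) < (Num.truncn (2 * (C + 1))).+1%:R := truncnS_gt _.
set J := _%:R => hJ.
have -> : 3 / 2 = 1 + 2^-1 :> R by field.
by rewrite lerD2l ler_pdivlMr; lra.
Qed.

Lemma sum_gn_le_large [x u v] : 8 * (C + 1) + 2 <= ln x -> 0 < u ->
  ln x <= 2 * ln u -> u <= v -> ln v <= 3 / 2 * ln x ->
  sum_gn g u v <= 4 * (C + 1) * 2 ^+ (Num.truncn (2 * (C + 1))).+1 *
    (ln (ln v / ln u) + (ln x)^-1) * sum_gdiv g (Num.truncn x).
Proof.
move=> lx u0 lxu uv lvx; have C0 := C_ge0.
have lu : 1 < ln u by lra.
have lx0 : 0 < ln x by lra.
apply: le_trans (sum_gn_le (ge2_of_ln_gt1 lu) uv) _.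
have ilu : (ln u)^-1 <= 2 * (ln x)^-1.
  have -> : 2 * (ln x)^-1 = (2^-1 * ln x)^-1 by rewrite invfM invrK.
  by rewrite lef_pV2 ?posrE; lra.
have luv : 0 <= ln (ln v / ln u) by rewrite ln_div_ge0 ?ler_ln ?posrE //; lra.
have Gv : sum_gdiv g (Num.truncn v) <=
    2 ^+ (Num.truncn (2 * (C + 1))).+1 * sum_gdiv g (Num.truncn x).
  by apply: sum_gdiv_ln32_le; lra.
set P := ln (ln v / ln u) + (ln x)^-1.
have P0 : 0 <= P by rewrite /P addr_ge0 // invr_ge0 ltW.
apply: le_trans (_ : _ <= (C + 1) * sum_gdiv g (Num.truncn v) * (4 * P)) _.
  apply: ler_wpM2l; first by rewrite mulr_ge0 ?sum_gdiv_ge0 //; lra.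
  by move: ilu luv; rewrite /P; set a := (ln u)^-1; set b := (ln x)^-1; set l := ln _; lra.
rewrite (_ : _ * P * _ = (C + 1) * (2 ^+ (Num.truncn (2 * (C + 1))).+1 *
  sum_gdiv g (Num.truncn x)) * (4 * P)); last by ring.
by apply: ler_wpM2r; [rewrite mulr_ge0 | apply: ler_wpM2l => //; lra].
Qed.

Lemma sum_gn_le_small [x u v L] : 2 <= x -> ln x < L -> 0 < u -> 0 < ln u -> u <= v ->
  ln v <= 3 / 2 * ln x ->
  sum_gn g u v <= L * sum_gdiv g (Num.truncn (expR (3 / 2 * L))) *
    (ln (ln v / ln u) + (ln x)^-1) * sum_gdiv g (Num.truncn x).
Proof.
move=> x2 xL u0 lu0 uv lvx; have lx0 : 0 < ln x by rewrite ln_gt0 //; lra.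
apply: le_trans (sum_gn_le_sum_gdiv (ltW u0) uv) _.
have vV : (Num.truncn v <= Num.truncn (expR (3 / 2 * L)))%N.
  by apply: le_truncn; rewrite -ler_ln ?posrE ?expR_gt0 ?expRK //; lra.
apply: le_trans (le_sum_gdiv vV) _.
set P := _ + _; have LP : 1 <= L * P.
  have : 1 <= L * (ln x)^-1 by rewrite ler_pdivlMr // mul1r ltW.
  move/le_trans; apply; rewrite ler_wpM2l ?lerDr ?ln_div_ge0 ?ler_ln ?posrE //; lra.
have G1 : 1 <= sum_gdiv g (Num.truncn x).
  by rewrite sum_gdiv_ge1 // trunc_gt0; lra.
rewrite (_ : L * _ * P * _ = sum_gdiv g (Num.truncn (expR (3 / 2 * L))) *
  (L * P * sum_gdiv g (Num.truncn x))); last by ring.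
by rewrite -[leLHS]mulr1 ler_wpM2l ?sum_gdiv_ge0 // -[1]mulr1 ler_pM.
Qed.

Lemma sum_gn_le_lnln : exists K, forall x u v : R,
  2 <= x -> x `^ 2^-1 <= u -> u <= v -> v <= x `^ (3 / 2) ->
  sum_gn g u v <= K * (ln (ln v / ln u) + (ln x)^-1) * sum_gdiv g (Num.truncn x).
Proof.
have C0 := C_ge0; pose L := 8 * (C + 1) + 2.
pose K1 := 4 * (C + 1) * 2 ^+ (Num.truncn (2 * (C + 1))).+1.
pose K2 := L * sum_gdiv g (Num.truncn (expR (3 / 2 * L))).
have K1_ge0 : 0 <= K1 by rewrite !mulr_ge0 ?exprn_ge0 //; lra.
have K2_ge0 : 0 <= K2 by rewrite mulr_ge0 ?sum_gdiv_ge0 // /L; lra.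
exists (K1 + K2) => x u v x2 xu uv vx.
have [u0 lxu luv lvx] := ln_powR_range x2 xu uv vx.
have lx0 : 0 < ln x by rewrite ln_gt0 //; lra.
have lu0 : 0 < ln u by lra.
have PG0 : 0 <= (ln (ln v / ln u) + (ln x)^-1) * sum_gdiv g (Num.truncn x).
  by rewrite mulr_ge0 ?sum_gdiv_ge0 ?addr_ge0 ?ln_div_ge0 // invr_ge0 ltW.
rewrite -mulrA; have [Lx|xL] := lerP L (ln x).
  apply: le_trans (sum_gn_le_large Lx u0 lxu uv lvx) _.
  by rewrite -mulrA ler_wpM2r // lerDl.
apply: le_trans (sum_gn_le_small x2 xL u0 lu0 uv lvx) _.
by rewrite -mulrA ler_wpM2r // lerDr.
Qed.

End Summatory.

Theorem lemma3 (R : realType) (g : nat -> R) :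
  multiplicative_fn g ->
  nontrivial g ->
  (forall n : nat, 0 <= g n) ->
  (exists B : R, forall p : nat, prime p -> g p <= B) ->
  cvgn (series (pp2_terms g)) ->
  (exists C : R, forall y : R, 2 <= y -> `|y^-1 * cheb_g g y| <= C) ->
  exists K : R, forall x u v : R,
    2 <= x -> x `^ (2^-1) <= u -> u <= v -> v <= x `^ (3 / 2) ->
    `|sum_gn g u v| <= K * ((ln (ln v / ln u)) + (ln x)^-1) * sum_gn g 0 x.
Proof.
move=> [g1 gM] _ g_ge0 _ _ [C hC].
have cheb_g_le y : 2 <= y -> cheb_g g y <= C * y.
  move=> y2; have y0 : 0 < y by lra.
  move: (hC y y2); rewrite ger0_norm; first by rewrite mulrC ler_pdivrMr.
  by rewrite mulr_ge0 ?invr_ge0 ?(cheb_g_ge0 g_ge0) // ltW.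
have [K hK] := sum_gn_le_lnln g1 g_ge0 gM cheb_g_le.
exists K => x u v x2 xu uv vx.
rewrite ger0_norm; last by apply: sumr_ge0 => n _; rewrite divr_ge0.
by rewrite sum_gn0E; apply: hK.
Qed.
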